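(* Let $X$ be a finite subset of $\mathbb Z$ with at least four elements, let $P$ be a linked pair partition of $X$, and let $p\in P$. Then there exists $q\in P$ with $q\neq p$ such that $P\setminus\{q\}$ is a linked pair partition of $X\setminus q$.
   Context: A pair of a finite set $X$ is a two-element subset; a pair partition of $X$ is a partition of $X$ into pairs. Two distinct pairs $p_1,p_2$ of a pair partition of $X\subset\mathbb Z$ are called linked if $p_1\cap[\min p_2,\max p_2]\neq\emptyset$ and $p_2\cap[\min p_1,\max p_1]\neq\emptyset$. A linked path in $P$ from $p$ to $p'$ is a map $\gamma:\{0,\dots,l\}\to P$ with $\gamma(0)=p$, $\gamma(l)=p'$ and $\gamma(i),\gamma(i+1)$ linked for all $i<l$. $P$ is called linked if for any two elements $p_1,p_2\in P$ there is a linked path in $P$ from $p_1$ to $p_2$. *)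

From HB Require Import structures.
From mathcomp Require Import all_boot all_order all_algebra.
Set Implicit Arguments. Unset Strict Implicit. Unset Printing Implicit Defensive.
Import Order.TTheory GRing.Theory Num.Theory.

(* Encoding: a finite subset X of Z is a duplicate-free list [X : seq int];
   a pair {a,b} (a <> b) is represented canonically by the ordered pair
   (min, max), i.e. [(a, b) : int * int] with [a < b]; a set of pairs is a
   list of such representatives. *)

Local Open Scope ring_scope.

Definition in_pair (x : int) (p : int * int) : bool := (x == p.1) || (x == p.2).

Definition meets_interval (p1 p2 : int * int) : bool :=
  has (fun x => (p2.1 <= x) && (x <= p2.2)) [:: p1.1; p1.2].

Definition linked_pairs (p1 p2 : int * int) : bool :=
  [&& p1 != p2, meets_interval p1 p2 & meets_interval p2 p1].

Definition pair_partition (X : seq int) (P : seq (int * int)) : Prop :=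
  [/\ all (fun p => p.1 < p.2) P,
      pairwise (fun p q => ~~ in_pair p.1 q && ~~ in_pair p.2 q) P &
      forall x, (x \in X) = has (in_pair x) P].

Definition linked_path (P : seq (int * int)) (p p' : int * int)
    (s : seq (int * int)) : bool :=
  [&& all (mem P) s, path linked_pairs p s & last p s == p'].

Definition linked_partition (P : seq (int * int)) : Prop :=
  forall p1 p2, p1 \in P -> p2 \in P -> exists s, linked_path P p1 p2 s.

Definition remove_pair (X : seq int) (q : int * int) : seq int :=
  [seq x <- X | ~~ in_pair x q].

From mathcomp Require Import all_boot all_order all_algebra.
From Stdlib Require Import Classical.

(* View P as a graph whose edges are the linked pairs.  Pick q at maximal
   distance from p.  Every other vertex r is reached from p by a shortest path
   avoiding q: a shortest path through q would reach r strictly later than q,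
   against the maximality of q.  So P \ {q} stays connected through p, and
   removing the two points of q from X leaves a pair partition of the rest. *)

Lemma ex_minimal (Q : nat -> Prop) n :
  Q n -> exists m, Q m /\ forall k, Q k -> m <= k.
Proof.
elim/ltn_ind: n => n IH Qn.
have [[k [lt_kn Qk]] | no_smaller] := classic (exists k, k < n /\ Q k).
  exact: IH Qk.
exists n; split=> // k Qk; rewrite leqNgt; apply/negP => lt_kn.
by apply: no_smaller; exists k.
Qed.

Lemma seq_choice {T : eqType} {U : Type} (y0 : U) (s : seq T) (Q : T -> U -> Prop) :
  (forall x, x \in s -> exists y, Q x y) ->
  exists f : T -> U, forall x, x \in s -> Q x (f x).
Proof.
elim: s => [|a s IH] Hs; first by exists (fun=> y0).
have [y Qay] := Hs a (mem_head a s).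
have [f Hf] : exists f : T -> U, forall x, x \in s -> Q x (f x).
  by apply: IH => x xs; apply: Hs; rewrite inE xs orbT.
exists (fun x => if x == a then y else f x) => x.
by rewrite inE; case: eqP => [-> | _ /Hf].
Qed.

Lemma seq_argmax {T : eqType} (f : T -> nat) {s : seq T} {x0 : T} :
  x0 \in s -> exists2 q, q \in s & forall r, r \in s -> f r <= f q.
Proof.
elim: s x0 => // a [|b s] IH x0 _.
  by exists a => [|r]; rewrite ?inE // => /eqP ->.
have [q qs max_q] := IH b (mem_head b s).
have [le_aq | lt_qa] := leqP (f a) (f q).
  exists q => [|r]; first by rewrite inE qs orbT.
  by rewrite inE => /predU1P[-> | /max_q].
exists a => [|r]; first exact: mem_head.
by rewrite inE => /predU1P[-> // | /max_q le_rq]; exact: leq_trans le_rq (ltnW lt_qa).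
Qed.

Lemma pairwise_either {T : eqType} {R : rel T} {s : seq T} {a b : T} :
  pairwise R s -> a \in s -> b \in s -> a != b -> R a b || R b a.
Proof.
elim: s => // c s IH; rewrite pairwise_cons => /andP[Rc Rs].
rewrite !inE => /predU1P[-> | as_] /predU1P[-> | bs] ab.
- by rewrite eqxx in ab.
- by rewrite (allP Rc).
- by rewrite (allP Rc) ?orbT.
- exact: IH.
Qed.

Section NonSeparatingVertex.

Set Implicit Arguments.
Unset Strict Implicit.

Variables (T : eqType) (e : rel T).
Hypothesis e_sym : symmetric e.

Definition epath (s : seq T) (a b : T) (t : seq T) :=
  [&& all (mem s) t, path e a t & last a t == b].

Definition connected_on (s : seq T) :=
  forall a b, a \in s -> b \in s -> exists t, epath s a b t.

Definition epath_len (s : seq T) (a b : T) (n : nat) :=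
  exists t, epath s a b t /\ size t = n.

Lemma epath_rev (s : seq T) a b t :
  a \in s -> epath s a b t -> epath s b a (rev (belast a t)).
Proof.
move=> a_s /and3P[t_s e_t /eqP <-].
rewrite /epath all_rev rev_path (@eq_path _ _ e) ?e_t; last by move=> x y; rewrite e_sym.
apply/andP; split.
  by apply/allP => x /mem_belast; rewrite inE => /predU1P[-> | /(allP t_s)].
by case: t {t_s e_t} => //= x t; rewrite rev_cons last_rcons.
Qed.

Lemma epath_cat (s : seq T) a b c t u :
  epath s a b t -> epath s b c u -> epath s a c (t ++ u).
Proof.
move=> /and3P[t_s e_t /eqP t_b] /and3P[u_s e_u u_c].
by rewrite /epath all_cat cat_path last_cat t_b t_s e_t u_s e_u.
Qed.

Lemma epath_prefix (s : seq T) a b t1 c t2 :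
  epath s a b (t1 ++ c :: t2) -> epath s a c (rcons t1 c).
Proof.
rewrite /epath all_cat cat_path /=.
move=> /and3P[/and3P[t1_s c_s _] /and3P[e_t1 e_c _] _].
by rewrite all_rcons rcons_path last_rcons t1_s e_t1 e_c eqxx !andbT.
Qed.

Lemma epath_sub (s s' : seq T) a b t :
  all (mem s') t -> epath s a b t -> epath s' a b t.
Proof. by move=> t_s' /and3P[_ e_t t_b]; rewrite /epath t_s' e_t t_b. Qed.

Lemma connected_from (s : seq T) p :
  p \in s -> (forall r, r \in s -> exists t, epath s p r t) -> connected_on s.
Proof.
move=> p_s from_p a b a_s b_s.
have [t pa] := from_p a a_s; have [u pb] := from_p b b_s.
by exists (rev (belast p t) ++ u); apply: epath_cat (epath_rev p_s pa) pb.
Qed.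

Lemma epath_len0 (s : seq T) a b : epath_len s a b 0 -> a = b.
Proof. by case=> [[|? ?] [/and3P[_ _ /eqP]]]. Qed.

Definition shortest (s : seq T) (a b : T) (n : nat) :=
  epath_len s a b n /\ forall k, epath_len s a b k -> n <= k.

Lemma ex_distance (s : seq T) p : connected_on s -> p \in s ->
  exists d : T -> nat, forall r, r \in s -> shortest s p r (d r).
Proof.
move=> s_conn p_s; apply: (seq_choice 0) => r r_s.
have [t pr] := s_conn p r p_s r_s.
by apply: ex_minimal (size t) _; exists t.
Qed.

Lemma farthest_not_separating (s : seq T) p q (d : T -> nat) r :
  (forall r, r \in s -> shortest s p r (d r)) ->
  q \in s -> (forall r, r \in s -> d r <= d q) -> r \in s -> r != q ->
  exists t, epath [seq x <- s | x != q] p r t.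
Proof.
move=> dist q_s q_far r_s rq.
have [[t [pr size_t]] _] := dist r r_s.
have q_t : q \notin t.
  apply/negP => qt; move: pr size_t; case/splitPr: qt => t1 t2 pr size_t.
  have le_dq : d q <= (size t1).+1.
    rewrite -(size_rcons t1 q) (proj2 (dist q q_s)) //.
    by exists (rcons t1 q); rewrite (epath_prefix pr).
  case: t2 pr size_t => [|y t2] pr size_t.
    by move: pr => /and3P[_ _]; rewrite last_cat /= eq_sym (negPf rq).
  have := q_far r r_s; rewrite -size_t size_cat /= leqNgt (leq_ltn_trans le_dq) //.
  by rewrite addnS ltnS -addn1 leq_add2l.
have /and3P[t_s _ _] := pr.
exists t; apply: epath_sub pr; apply/allP => x xt.
have x_s : x \in s := allP t_s x xt.
rewrite [mem _ x]mem_filter x_s andbT.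
by apply: contraNneq q_t => <-.
Qed.

Theorem exists_nonseparating_vertex (s : seq T) p :
  connected_on s -> p \in s -> (exists2 r, r \in s & r != p) ->
  exists q, [/\ q \in s, q != p & connected_on [seq x <- s | x != q]].
Proof.
move=> s_conn p_s [r0 r0_s r0p].
have [d dist] := ex_distance s_conn p_s.
have [q q_s q_far] := seq_argmax d p_s.
have qp : q != p.
  apply: contra_neq r0p => q_p.
  have d_p : d p = 0.
    apply/eqP; rewrite -leqn0 (proj2 (dist p p_s)) //.
    by exists [::]; rewrite /epath /= eqxx.
  have d_r0 : d r0 = 0 by apply/eqP; rewrite -leqn0 -d_p -q_p q_far.
  by have [+ _] := dist r0 r0_s; rewrite d_r0 => /epath_len0.
exists q; split=> //; apply: (connected_from (p := p)).
  by rewrite mem_filter eq_sym qp.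
move=> r; rewrite mem_filter => /andP[rq r_s].
exact: farthest_not_separating dist q_s q_far r_s rq.
Qed.

End NonSeparatingVertex.

Lemma pair_partition_disjoint X P a b x :
  pair_partition X P -> a \in P -> b \in P -> a != b ->
  in_pair x a -> ~~ in_pair x b.
Proof.
move=> [_ P_disj _] a_P b_P ab x_a.
have /orP[/andP[a1b a2b] | /andP[b1a b2a]] := pairwise_either P_disj a_P b_P ab.
  by move: x_a; rewrite /in_pair => /orP[] /eqP ->.
apply: contraL x_a => /orP[] /eqP ->; by rewrite ?b1a ?b2a.
Qed.

Lemma pair_partition_remove X P q :
  pair_partition X P -> q \in P ->
  pair_partition (remove_pair X q) [seq r <- P | r != q].
Proof.
move=> XP q_P; have [P_lt P_disj X_P] := XP; split.
- by apply/allP => r; rewrite mem_filter => /andP[_ /(allP P_lt)].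
- exact: pairwise_filter.
- move=> x; rewrite mem_filter X_P; apply/andP/hasP.
    move=> [x_q /hasP[r r_P x_r]]; exists r => //.
    by rewrite mem_filter r_P andbT; apply: contraNneq x_q => <-.
  move=> [r]; rewrite mem_filter => /andP[rq r_P] x_r.
  by split; [apply: pair_partition_disjoint XP r_P q_P rq x_r | apply/hasP; exists r].
Qed.

Lemma pair_partition_other X P p :
  uniq X -> (2 < size X)%N -> pair_partition X P -> exists2 r, r \in P & r != p.
Proof.
move=> X_uniq X_big [_ _ X_P].
have [/hasP[r r_P rp] | /hasPn only_p] := boolP (has (predC1 p) P); first by exists r.
suff : (size X <= size [:: p.1; p.2])%N by rewrite leqNgt X_big.
apply: uniq_leq_size X_uniq _ => x; rewrite X_P => /hasP[r r_P].
by move/negbNE/eqP: (only_p r r_P) => ->; rewrite /in_pair !inE.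
Qed.

Lemma linked_pairs_sym : symmetric linked_pairs.
Proof. by move=> a b; rewrite /linked_pairs eq_sym [meets_interval a b && _]andbC. Qed.

Theorem mainTheorem7 (X : seq int) (P : seq (int * int)) (p : int * int) :
  uniq X -> (4 <= size X)%N ->
  pair_partition X P -> linked_partition P -> p \in P ->
  exists q, [/\ q \in P, q != p,
    pair_partition (remove_pair X q) [seq r <- P | r != q] &
    linked_partition [seq r <- P | r != q]].
Proof.
move=> X_uniq X_big XP P_linked p_P.
have other := pair_partition_other p X_uniq (leq_trans (isT : 2 < 4)%N X_big) XP.
(* [linked_partition] unfolds to [connected_on linked_pairs]. *)
have [q [q_P qp P'_linked]] :=
  exists_nonseparating_vertex linked_pairs_sym P_linked p_P other.
by exists q; split=> //; apply: pair_partition_remove.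
Qed.
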